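(* (Convergence of the one-dimensional Crank–Nicolson collocation scheme.) Consider the nonlocal problem $$\partial_t u(x,t)+\int_a^b\frac{u(x,t)-u(y,t)}{|x-y|^{\gamma}}\,dy=f(x,t),\qquad (x,t)\in(a,b)\times(0,T],$$ with $0<\gamma<1$, Dirichlet boundary values $u(a,t),u(b,t)$ and initial value $u(x,0)=u_0(x)$, and let $U^k\in\mathbb R^{2M-1}$, $k=0,\dots,N$, be the Crank–Nicolson collocation approximation defined in the context. Assume the exact solution $u$ is smooth enough that the truncation residual satisfies $|R^{k-1/2}_i|\le C_R(\tau^2+h^{4-\gamma})$ for all $i=1,\dots,2M-1$, $k=1,\dots,N$, with a constant $C_R$ independent of $\tau,h,i,k$. Then, with $C_a=\frac{2(b-a)^{1-\gamma}}{1-\gamma}$, $$\max_{1\le i\le 2M-1}\big|u(x_{i/2},t_k)-U^k_i\big|\le C_R\,T\,e^{TC_a}\,(\tau^2+h^{4-\gamma}),\qquad k=0,1,\dots,N;$$ that is, the error is $\mathcal O(\tau^2+h^{4-\gamma})$.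
   Context: Fix real numbers $a<b$, an exponent $\gamma\in(0,1)$ and an integer $M\ge 2$. Set $h=(b-a)/M$ and $x_s=a+sh$ for $s\in\{0,\tfrac12,1,\tfrac32,\dots,M\}$. The piecewise quadratic Lagrange basis functions on $[a,b]$ are: for integers $0\le l\le M$, $\phi_l(x)=\frac{x-x_{l-1}}{h}\cdot\frac{2x-(x_l+x_{l-1})}{h}$ for $x\in[x_{l-1},x_l]\cap[a,b]$, $\phi_l(x)=\frac{x_{l+1}-x}{h}\cdot\frac{(x_{l+1}+x_l)-2x}{h}$ for $x\in[x_l,x_{l+1}]\cap[a,b]$, and $\phi_l(x)=0$ otherwise; and for $l=1,\dots,M$, $\phi_{l-\frac12}(x)=\frac{4(x-x_{l-1})(x_l-x)}{h^2}$ for $x\in[x_{l-1},x_l]$ and $0$ otherwise. For $i\in\{1,\dots,2M-1\}$ and $j\in\{0,1,\dots,2M\}$ define $$d_i=\int_a^b\frac{dy}{|x_{i/2}-y|^{\gamma}},\qquad g_{ij}=\int_a^b\frac{\phi_{j/2}(y)}{|x_{i/2}-y|^{\gamma}}\,dy .$$ The one-dimensional collocation matrix is the $(2M-1)\times(2M-1)$ matrix $\mathcal A$ with entries $A_{ij}=\delta_{ij}d_i-g_{ij}$, $i,j\in\{1,\dots,2M-1\}$. The following fact, established in earlier work, may be used: $g_{ij}>0$ for all $i,j\in\{1,\dots,2M-1\}$, and $\mathcal A$ is strictly diagonally dominant by rows. Time discretization: $T>0$, $N\ge1$, $\tau=T/N$, $t_k=k\tau$, $t_{k-1/2}=(t_{k-1}+t_k)/2$.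 The Crank–Nicolson collocation scheme: $U^0_i=u_0(x_{i/2})$, and for $k=1,\dots,N$, $$\Big(I+\frac{\tau}{2}\mathcal A\Big)U^k=\Big(I-\frac{\tau}{2}\mathcal A\Big)U^{k-1}+\tau F^{k-1/2}+\tau K^{k-1/2},$$ where $F^{k-1/2}_i=f(x_{i/2},t_{k-1/2})$ and $K^{k-1/2}_i=\tfrac12 g_{i,0}\big(u(a,t_{k-1})+u(a,t_k)\big)+\tfrac12 g_{i,2M}\big(u(b,t_{k-1})+u(b,t_k)\big)$ (boundary contributions). The truncation residual $R^{k-1/2}\in\mathbb R^{2M-1}$ is defined by inserting the exact nodal values $u^k=(u(x_{i/2},t_k))_{i=1}^{2M-1}$ into the scheme: $$\tau R^{k-1/2}=\Big(I+\frac{\tau}{2}\mathcal A\Big)u^k-\Big(I-\frac{\tau}{2}\mathcal A\Big)u^{k-1}-\tau F^{k-1/2}-\tau K^{k-1/2}.$$ *)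

From Stdlib Require Import Reals Lra Lia.
Open Scope R_scope.

Definition mesh (a b : R) (M : nat) : R := (b - a) / INR M.
Definition xs (a b : R) (M : nat) (s : R) : R := a + s * mesh a b M.
Definition node (a b : R) (M : nat) (j : nat) : R := xs a b M (INR j / 2).

(* Piecewise quadratic Lagrange basis function phi_{j/2} on [a,b]. *)
Definition phi (a b : R) (M : nat) (j : nat) (y : R) : R :=
  let h := mesh a b M in
  if Nat.even j then
    let l := INR j / 2 in
    let xm := xs a b M (l - 1) in
    let x0 := xs a b M l in
    let xp := xs a b M (l + 1) in
    if Rle_dec a y then if Rle_dec y b then
      if Rle_dec xm y then if Rle_dec y x0 then
        ((y - xm) / h) * ((2 * y - (x0 + xm)) / h)
      else
      if Rle_dec x0 y then if Rle_dec y xp then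
        ((xp - y) / h) * (((xp + x0) - 2 * y) / h)
      else 0 else 0
      else
      if Rle_dec x0 y then if Rle_dec y xp then
        ((xp - y) / h) * (((xp + x0) - 2 * y) / h)
      else 0 else 0
    else 0 else 0
  else
    let l := (INR j + 1) / 2 in
    let xm := xs a b M (l - 1) in
    let x0 := xs a b M l in
    if Rle_dec xm y then if Rle_dec y x0 then
      4 * (y - xm) * (x0 - y) / (h * h)
    else 0 else 0.

(* Improper Riemann integral of f over [a,b] with a (possible) singularity
   at an interior point c: I is the limit of
   int_a^{c-e1} f + int_{c+e2}^b f as e1, e2 -> 0+ independently. *)
Definition improper_int (f : R -> R) (a b c I : R) : Prop :=
  forall eps, 0 < eps -> exists delta, 0 < delta /\
    forall e1 e2, 0 < e1 < delta -> 0 < e2 < delta ->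
      exists (pr1 : Riemann_integrable f a (c - e1))
             (pr2 : Riemann_integrable f (c + e2) b),
        Rabs (RiemannInt pr1 + RiemannInt pr2 - I) < eps.

Definition kern (gamma x y : R) : R := / Rpower (Rabs (x - y)) gamma.

Definition Amat (d : nat -> R) (g : nat -> nat -> R) (i j : nat) : R :=
  (if Nat.eqb i j then d i else 0) - g i j.

Definition Amul (M : nat) (d : nat -> R) (g : nat -> nat -> R)
  (v : nat -> R) (i : nat) : R :=
  sum_f 1 (2 * M - 1) (fun j => Amat d g i j * v j).

(* Subtracting the scheme from the definition of the residual shows that the error
   e^k = u^k - U^k obeys the same Crank-Nicolson recursion, forced by tau R^{k-1/2}.
   In a row where |e^k| is maximal, diagonal dominance lets the off-diagonal terms be
   absorbed by the diagonal ones, so max|e^k| <= (1 + tau A_ii) max|e^{k-1}| + tau max|R|.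
   Here 0 <= A_ii because g_ii <= d_i (the basis functions are bounded by 1), and
   A_ii <= d_i <= C_a by integrating |x - y|^(-gamma) explicitly on both sides of x.
   A discrete Gronwall argument and (1 + tau C_a)^k <= e^(k tau C_a) conclude. *)

From Stdlib Require Import Reals Lra Lia.
From Coquelicot Require Import Coquelicot.
Open Scope R_scope.

Lemma is_derive_Rpower_shift (s c p y : R) : 0 < s * (y - c) ->
  is_derive (fun z => Rpower (s * (z - c)) p) y (s * (p * Rpower (s * (y - c)) (p - 1))).
Proof.
  intro Hpos. unfold Rpower. auto_derive; [lra|].
  replace ((p - 1) * ln (s * (y - c))) with (p * ln (s * (y - c)) + - ln (s * (y - c))) by ring.
  rewrite exp_plus, exp_Ropp, exp_ln by lra.
  replace (y + - c) with (y - c) by ring.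
  field. split; intro E; rewrite E in Hpos; lra.
Qed.

(* With [s = 1] or [s = -1] the primitive [s |y - c|^(1-gamma) / (1-gamma)] covers
   both sides of the singularity. *)
Lemma RiemannInt_kern (gamma c s lo hi : R)
  (pr : Riemann_integrable (kern gamma c) lo hi) :
  gamma <> 1 -> s * s = 1 -> lo <= hi ->
  (forall y, lo <= y <= hi -> 0 < s * (y - c)) ->
  RiemannInt pr
  = s * (Rpower (s * (hi - c)) (1 - gamma) - Rpower (s * (lo - c)) (1 - gamma)) / (1 - gamma).
Proof.
  intros Hg Hs Hlh Hpos.
  set (G := fun y => Rpower (s * (y - c)) (- gamma)).
  set (F := fun y => s / (1 - gamma) * Rpower (s * (y - c)) (1 - gamma)).
  assert (Hbounds : forall x, Rmin lo hi <= x <= Rmax lo hi -> lo <= x <= hi)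
    by (intros x Hx; rewrite Rmin_left, Rmax_right in Hx; lra).
  assert (HFG : is_RInt G lo hi (minus (F hi) (F lo))).
  { apply (@is_RInt_derive R_CompleteNormedModule); intros x Hx; apply Hbounds in Hx.
    - replace (G x)
        with (s / (1 - gamma) * (s * ((1 - gamma) * Rpower (s * (x - c)) (1 - gamma - 1)))).
      + apply is_derive_scal, is_derive_Rpower_shift, Hpos, Hx.
      + unfold G. replace (1 - gamma - 1) with (- gamma) by ring.
        transitivity (s * s * Rpower (s * (x - c)) (- gamma)); [field; lra|].
        rewrite Hs; ring.
    - apply (@ex_derive_continuous R_AbsRing R_NormedModule).
      eexists. apply is_derive_Rpower_shift, Hpos, Hx. }
  rewrite <- RInt_Reals, (RInt_ext _ G), (is_RInt_unique _ _ _ _ HFG).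
  - unfold minus, plus, opp, F; simpl. field. lra.
  - intros x Hx. assert (Hx' : lo <= x <= hi) by (apply Hbounds; lra). unfold kern, G.
    assert (Hunit : Rabs s = 1).
    { assert (Rabs s * Rabs s = 1) by (rewrite <- Rabs_mult, Hs; apply Rabs_R1).
      pose proof (Rabs_pos s); nra. }
    rewrite Rpower_Ropp, Rabs_minus_sym, <- (Rmult_1_l (Rabs (x - c))), <- Hunit,
      <- Rabs_mult, Rabs_pos_eq; [reflexivity|].
    left; apply Hpos, Hx'.
Qed.

Lemma kern_truncated_integral_le (gamma a b c e : R)
  (pr1 : Riemann_integrable (kern gamma c) a (c - e))
  (pr2 : Riemann_integrable (kern gamma c) (c + e) b) :
  0 < gamma < 1 -> 0 < e -> a < c - e -> c + e < b ->
  RiemannInt pr1 + RiemannInt pr2 <= 2 * Rpower (b - a) (1 - gamma) / (1 - gamma).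
Proof.
  intros Hg He Ha Hb.
  rewrite (RiemannInt_kern gamma c (-1)), (RiemannInt_kern gamma c 1);
    try (intros; lra); try lra.
  replace (-1 * (c - e - c)) with e by ring. replace (-1 * (a - c)) with (c - a) by ring.
  replace (1 * (b - c)) with (b - c) by ring. replace (1 * (c + e - c)) with e by ring.
  set (p := 1 - gamma).
  assert (Hleft : Rpower (c - a) p <= Rpower (b - a) p) by (apply Rle_Rpower_l; unfold p; lra).
  assert (Hright : Rpower (b - c) p <= Rpower (b - a) p) by (apply Rle_Rpower_l; unfold p; lra).
  assert (0 < Rpower e p) by (unfold Rpower; apply exp_pos).
  assert (0 < / p) by (apply Rinv_0_lt_compat; unfold p; lra).
  unfold Rdiv. nra.
Qed.

Lemma improper_int_sample (f : R -> R) (a b c I eps : R) :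
  a < c < b -> 0 < eps -> improper_int f a b c I ->
  exists delta, 0 < delta /\ forall e, 0 < e < delta ->
    a < c - e /\ c + e < b /\
    exists (pr1 : Riemann_integrable f a (c - e)) (pr2 : Riemann_integrable f (c + e) b),
      Rabs (RiemannInt pr1 + RiemannInt pr2 - I) < eps.
Proof.
  intros Hc Heps HI. destruct (HI eps Heps) as [delta [Hdelta Happrox]].
  exists (Rmin delta (Rmin (c - a) (b - c))). split.
  - repeat apply Rmin_glb_lt; lra.
  - intros e He.
    pose proof (Rmin_l delta (Rmin (c - a) (b - c))).
    pose proof (Rmin_r delta (Rmin (c - a) (b - c))).
    pose proof (Rmin_l (c - a) (b - c)). pose proof (Rmin_r (c - a) (b - c)).
    split; [lra|]. split; [lra|]. apply Happrox; lra.
Qed.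

Lemma improper_int_le (f g : R -> R) (a b c I J : R) :
  a < c < b -> (forall y, f y <= g y) ->
  improper_int f a b c I -> improper_int g a b c J -> I <= J.
Proof.
  intros Hc Hfg HI HJ. apply Rnot_lt_le. intro HJI.
  destruct (improper_int_sample f a b c I ((I - J) / 2) Hc ltac:(lra) HI) as [d1 [Hd1 Pf]].
  destruct (improper_int_sample g a b c J ((I - J) / 2) Hc ltac:(lra) HJ) as [d2 [Hd2 Pg]].
  set (e := Rmin d1 d2 / 2).
  assert (He : 0 < e < d1 /\ 0 < e < d2)
    by (unfold e; pose proof (Rmin_l d1 d2); pose proof (Rmin_r d1 d2);
        pose proof (Rmin_glb_lt d1 d2 0 Hd1 Hd2); lra).
  destruct (Pf e (proj1 He)) as [Ha [Hb [pf1 [pf2 Ef]]]].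
  destruct (Pg e (proj2 He)) as [_ [_ [pg1 [pg2 Eg]]]].
  assert (RiemannInt pf1 <= RiemannInt pg1) by (apply RiemannInt_P19; [lra|auto]).
  assert (RiemannInt pf2 <= RiemannInt pg2) by (apply RiemannInt_P19; [lra|auto]).
  apply Rabs_def2 in Ef. apply Rabs_def2 in Eg. lra.
Qed.

Lemma improper_int_le_const (f : R -> R) (a b c I K : R) :
  a < c < b ->
  (forall e (pr1 : Riemann_integrable f a (c - e)) (pr2 : Riemann_integrable f (c + e) b),
     0 < e -> a < c - e -> c + e < b -> RiemannInt pr1 + RiemannInt pr2 <= K) ->
  improper_int f a b c I -> I <= K.
Proof.
  intros Hc HK HI. apply Rnot_lt_le. intro HKI.
  destruct (improper_int_sample f a b c I ((I - K) / 2) Hc ltac:(lra) HI) as [d [Hd Pf]].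
  destruct (Pf (d / 2) ltac:(lra)) as [Ha [Hb [pr1 [pr2 E]]]].
  pose proof (HK (d / 2) pr1 pr2 ltac:(lra) Ha Hb).
  apply Rabs_def2 in E. lra.
Qed.

Lemma kern_pos (gamma x y : R) : 0 < kern gamma x y.
Proof. unfold kern, Rpower. apply Rinv_0_lt_compat, exp_pos. Qed.

Lemma improper_int_kern_le (gamma a b c d : R) :
  a < c < b -> 0 < gamma < 1 ->
  improper_int (fun y => kern gamma c y) a b c d ->
  d <= 2 * Rpower (b - a) (1 - gamma) / (1 - gamma).
Proof.
  intros Hc Hg. apply improper_int_le_const; [exact Hc|].
  intros e pr1 pr2. apply kern_truncated_integral_le, Hg.
Qed.

Lemma phi_le_1 (a b : R) (M j : nat) (y : R) : 0 < mesh a b M -> phi a b M j y <= 1.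
Proof.
  intro Hh. unfold phi. set (h := mesh a b M) in *.
  assert (Hshift : forall l,
      xs a b M (l + 1) = xs a b M l + h /\ xs a b M (l - 1) = xs a b M l - h)
    by (intro l; unfold xs; fold h; split; ring).
  assert (Hunit : forall lo z, lo <= z <= lo + h -> 0 <= (z - lo) / h <= 1).
  { intros lo z Hz. split.
    - apply Rdiv_le_0_compat; lra.
    - apply Rmult_le_reg_r with h; [lra|]. unfold Rdiv. rewrite Rmult_assoc, Rinv_l; lra. }
  destruct (Nat.even j).
  - set (x0 := xs a b M (INR j / 2)).
    destruct (Hshift (INR j / 2)) as [-> ->]. fold x0.
    assert (Hquad : forall s, 0 <= s <= 1 -> s * (2 * s - 1) <= 1)
      by (intros s Hs; assert (s * s <= s) by nra; nra).
    assert (Hrise : forall z, x0 - h <= z <= x0 ->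
      (z - (x0 - h)) / h * ((2 * z - (x0 + (x0 - h))) / h) <= 1).
    { intros z Hz. replace ((2 * z - (x0 + (x0 - h))) / h) with (2 * ((z - (x0 - h)) / h) - 1)
        by (field; lra).
      apply Hquad, Hunit. lra. }
    assert (Hfall : forall z, x0 <= z <= x0 + h ->
      (x0 + h - z) / h * ((x0 + h + x0 - 2 * z) / h) <= 1).
    { intros z Hz. replace ((x0 + h + x0 - 2 * z) / h) with (2 * ((x0 + h - z) / h) - 1)
        by (field; lra).
      apply Hquad, Hunit. lra. }
    repeat destruct Rle_dec; try lra; try (apply Hrise; lra); apply Hfall; lra.
  - set (x0 := xs a b M ((INR j + 1) / 2)).
    destruct (Hshift ((INR j + 1) / 2)) as [_ ->]. fold x0.
    repeat destruct Rle_dec; try lra.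
    replace (4 * (y - (x0 - h)) * (x0 - y) / (h * h))
      with (4 * ((y - (x0 - h)) / h) * (1 - (y - (x0 - h)) / h)) by (field; lra).
    set (s := (y - (x0 - h)) / h). pose proof (pow2_ge_0 (2 * s - 1)). nra.
Qed.

Lemma node_in_interval (a b : R) (M j : nat) :
  a < b -> (1 <= j <= 2 * M - 1)%nat -> a < node a b M j < b.
Proof.
  intros Hab Hj. unfold node, xs, mesh.
  assert (HM : 0 < INR M) by (apply lt_0_INR; lia).
  assert (1 <= INR j) by (apply (le_INR 1); lia).
  assert (INR j + 1 <= 2 * INR M).
  { rewrite <- S_INR. replace (2 * INR M) with (INR (2 * M)) by (rewrite mult_INR; simpl; ring).
    apply le_INR. lia. }
  replace (INR j / 2 * ((b - a) / INR M)) with ((b - a) * (INR j / (2 * INR M))) by (field; lra).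
  assert (0 < INR j / (2 * INR M) < 1).
  { split; [apply Rdiv_lt_0_compat; lra|].
    apply Rmult_lt_reg_r with (2 * INR M); [lra|]. unfold Rdiv.
    rewrite Rmult_assoc, Rinv_l; lra. }
  nra.
Qed.

Lemma improper_int_basis_kern_le (gamma a b c : R) (M j : nat) (gij di : R) :
  a < c < b -> 0 < mesh a b M ->
  improper_int (fun y => phi a b M j y * kern gamma c y) a b c gij ->
  improper_int (fun y => kern gamma c y) a b c di -> gij <= di.
Proof.
  intros Hc Hh. apply improper_int_le; [exact Hc|]. intro y.
  pose proof (phi_le_1 a b M j y Hh). pose proof (kern_pos gamma c y). nra.
Qed.

Definition offdiag_mul (M : nat) (d : nat -> R) (g : nat -> nat -> R)
  (v : nat -> R) (i : nat) : R :=
  sum_f 1 (2 * M - 1) (fun j => if Nat.eqb i j then 0 else Amat d g i j * v j).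

Definition offdiag_abs_sum (M : nat) (d : nat -> R) (g : nat -> nat -> R) (i : nat) : R :=
  sum_f 1 (2 * M - 1) (fun j => if Nat.eqb i j then 0 else Rabs (Amat d g i j)).

Lemma Amul_sub (M : nat) (d : nat -> R) (g : nat -> nat -> R) (v w : nat -> R) (i : nat) :
  Amul M d g (fun j => v j - w j) i = Amul M d g v i - Amul M d g w i.
Proof. unfold Amul, sum_f. rewrite <- minus_sum. apply sum_eq. intros; ring. Qed.

Lemma sum_f_R0_indicator (i : nat) (c : R) (m : nat) :
  sum_f_R0 (fun x => if Nat.eqb i (x + 1) then c else 0) m =
  if andb (Nat.leb 1 i) (Nat.leb i (m + 1)) then c else 0.
Proof.
  induction m as [|m IH]; simpl sum_f_R0.
  - destruct i as [|[|i]]; reflexivity.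
  - rewrite IH. replace (S m + 1)%nat with (S (m + 1)) by lia.
    destruct (Nat.eqb_spec i (S (m + 1))), (Nat.leb_spec 1 i),
      (Nat.leb_spec i (m + 1)), (Nat.leb_spec i (S (m + 1))); simpl; try lia; ring.
Qed.

Lemma Amul_diag_offdiag (M : nat) (d : nat -> R) (g : nat -> nat -> R) (v : nat -> R) (i : nat) :
  (1 <= i <= 2 * M - 1)%nat ->
  Amul M d g v i = Amat d g i i * v i + offdiag_mul M d g v i.
Proof.
  intro Hi. unfold Amul, offdiag_mul, sum_f.
  transitivity (sum_f_R0 (fun x => (if Nat.eqb i (x + 1) then Amat d g i i * v i else 0)
     + (if Nat.eqb i (x + 1) then 0 else Amat d g i (x + 1)%nat * v (x + 1)%nat))
     (2 * M - 1 - 1)).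
  { apply sum_eq. intros x _. destruct (Nat.eqb_spec i (x + 1)) as [<-|]; ring. }
  rewrite plus_sum, sum_f_R0_indicator.
  destruct (Nat.leb_spec 1 i), (Nat.leb_spec i (2 * M - 1 - 1 + 1)); simpl; lia || reflexivity.
Qed.

Lemma offdiag_abs_sum_ge0 (M : nat) (d : nat -> R) (g : nat -> nat -> R) (i : nat) :
  0 <= offdiag_abs_sum M d g i.
Proof.
  unfold offdiag_abs_sum, sum_f. apply cond_pos_sum.
  intro n. destruct Nat.eqb; [lra|apply Rabs_pos].
Qed.

Lemma offdiag_mul_bound (M : nat) (d : nat -> R) (g : nat -> nat -> R) (v : nat -> R)
  (i : nat) (B : R) :
  (1 <= M)%nat ->
  (forall j, (1 <= j <= 2 * M - 1)%nat -> Rabs (v j) <= B) ->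
  Rabs (offdiag_mul M d g v i) <= offdiag_abs_sum M d g i * B.
Proof.
  intros HM Hv. unfold offdiag_mul, offdiag_abs_sum, sum_f.
  eapply Rle_trans; [apply Rabs_triang_gen|].
  rewrite Rmult_comm, scal_sum. apply sum_Rle. intros n Hn.
  destruct (Nat.eqb i (n + 1)).
  - rewrite Rabs_R0. lra.
  - rewrite Rabs_mult. apply Rmult_le_compat_l; [apply Rabs_pos|].
    apply Hv. lia.
Qed.

Lemma exists_argmax_abs (v : nat -> R) (n : nat) : (1 <= n)%nat ->
  exists i, (1 <= i <= n)%nat /\ forall j, (1 <= j <= n)%nat -> Rabs (v j) <= Rabs (v i).
Proof.
  induction n as [|n IH]; intro Hn; [lia|].
  destruct (Nat.eq_dec n 0) as [->|Hn0].
  - exists 1%nat. split; [lia|]. intros j Hj. replace j with 1%nat by lia. lra.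
  - destruct (IH ltac:(lia)) as [i [Hi Hmax]].
    destruct (Rle_dec (Rabs (v (S n))) (Rabs (v i))).
    + exists i. split; [lia|]. intros j Hj.
      destruct (Nat.eq_dec j (S n)) as [->|]; [assumption|]. apply Hmax; lia.
    + exists (S n). split; [lia|]. intros j Hj.
      destruct (Nat.eq_dec j (S n)) as [->|]; [lra|].
      specialize (Hmax j ltac:(lia)). lra.
Qed.

Lemma cn_row_estimate (tau A S C B rho xm ym ox oy r : R) :
  0 < tau -> 0 <= S <= A -> A <= C -> 0 <= B ->
  Rabs ym <= B -> Rabs oy <= S * B -> Rabs ox <= S * Rabs xm -> Rabs r <= tau * rho ->
  xm + tau / 2 * (A * xm + ox) = ym - tau / 2 * (A * ym + oy) + r ->
  Rabs xm <= (1 + tau * C) * B + tau * rho.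
Proof.
  intros Htau HS HC HB Hy Hoy Hox Hr E.
  assert (Hlhs : Rabs (xm * (1 + tau / 2 * A)) = Rabs xm * (1 + tau / 2 * A)).
  { rewrite Rabs_mult, (Rabs_pos_eq (1 + _)); [reflexivity|].
    assert (0 <= tau / 2 * A) by (apply Rmult_le_pos; lra). lra. }
  assert (Hdamp : Rabs (1 - tau / 2 * A) <= 1 + tau / 2 * A).
  { assert (0 <= tau / 2 * A) by (apply Rmult_le_pos; lra). apply Rabs_le. lra. }
  assert (Htri : Rabs xm * (1 + tau / 2 * A)
    <= Rabs ym * (1 + tau / 2 * A) + tau / 2 * Rabs oy + tau / 2 * Rabs ox + tau * rho).
  { rewrite <- Hlhs.
    replace (xm * (1 + tau / 2 * A))
      with (ym * (1 - tau / 2 * A) + (- (tau / 2) * oy + (- (tau / 2) * ox + r))) by lra.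
    eapply Rle_trans; [apply Rabs_triang|]. rewrite Rabs_mult.
    eapply Rle_trans; [apply Rplus_le_compat_r, Rmult_le_compat_l, Hdamp; apply Rabs_pos|].
    eapply Rle_trans; [apply Rplus_le_compat_l, Rabs_triang|].
    eapply Rle_trans; [apply Rplus_le_compat_l, Rplus_le_compat_l, Rabs_triang|].
    rewrite !Rabs_mult, Rabs_Ropp, (Rabs_pos_eq (tau / 2)) by lra.
    rewrite (Rmult_comm (Rabs ym)). lra. }
  pose proof (Rabs_pos xm).
  assert (tau / 2 * Rabs oy <= tau / 2 * (A * B))
    by (apply Rmult_le_compat_l; [lra|]; apply Rle_trans with (S * B); [lra|];
        apply Rmult_le_compat_r; lra).
  assert (tau / 2 * Rabs ox <= tau / 2 * (A * Rabs xm))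
    by (apply Rmult_le_compat_l; [lra|]; apply Rle_trans with (S * Rabs xm); [lra|];
        apply Rmult_le_compat_r; lra).
  assert (Rabs ym * (1 + tau / 2 * A) <= B * (1 + tau / 2 * A))
    by (apply Rmult_le_compat_r; [|exact Hy];
        assert (0 <= tau / 2 * A) by (apply Rmult_le_pos; lra); lra).
  assert (tau * (A * B) <= tau * (C * B)) by (apply Rmult_le_compat_l; nra).
  lra.
Qed.

Lemma cn_step_max_norm (M : nat) (d : nat -> R) (g : nat -> nat -> R) (tau C rho B : R)
  (x y : nat -> R) :
  (1 <= M)%nat -> 0 < tau -> 0 <= B ->
  (forall i, (1 <= i <= 2 * M - 1)%nat -> 0 <= Amat d g i i <= C) ->
  (forall i, (1 <= i <= 2 * M - 1)%nat -> offdiag_abs_sum M d g i < Rabs (Amat d g i i)) ->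
  (forall j, (1 <= j <= 2 * M - 1)%nat -> Rabs (y j) <= B) ->
  (forall i, (1 <= i <= 2 * M - 1)%nat -> exists r, Rabs r <= tau * rho /\
     x i + tau / 2 * Amul M d g x i = y i - tau / 2 * Amul M d g y i + r) ->
  forall i, (1 <= i <= 2 * M - 1)%nat -> Rabs (x i) <= (1 + tau * C) * B + tau * rho.
Proof.
  intros HM Htau HB Hdiag Hdom Hy Hx.
  destruct (exists_argmax_abs x (2 * M - 1) ltac:(lia)) as [m [Hm Hmax]].
  intros i Hi. apply Rle_trans with (Rabs (x m)); [apply Hmax, Hi|].
  destruct (Hx m Hm) as [r [Hr E]].
  rewrite !(Amul_diag_offdiag M d g _ m Hm) in E.
  pose proof (Hdiag m Hm) as HA. pose proof (Hdom m Hm) as HS.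
  rewrite Rabs_pos_eq in HS by apply HA.
  apply (cn_row_estimate tau (Amat d g m m) (offdiag_abs_sum M d g m) C B rho
    (x m) (y m) (offdiag_mul M d g x m) (offdiag_mul M d g y m) r);
    try lra; try apply offdiag_mul_bound; auto.
  pose proof (offdiag_abs_sum_ge0 M d g m). lra.
Qed.

Lemma pow_1_plus_le_exp (x : R) (k : nat) : -1 <= x -> (1 + x) ^ k <= exp (INR k * x).
Proof.
  intro Hx. induction k as [|k IH].
  - simpl. rewrite Rmult_0_l, exp_0. lra.
  - rewrite S_INR, Rmult_plus_distr_r, Rmult_1_l, exp_plus. simpl pow.
    rewrite Rmult_comm. apply Rmult_le_compat; try lra.
    + apply pow_le. lra.
    + apply exp_ineq1_le.
Qed.

Lemma discrete_gronwall (P : nat -> Prop) (e : nat -> nat -> R) (N : nat) (q c : R) :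
  1 <= q -> 0 <= c -> (forall j, P j -> e 0%nat j = 0) ->
  (forall k B, (k < N)%nat -> 0 <= B -> (forall j, P j -> Rabs (e k j) <= B) ->
     forall j, P j -> Rabs (e (S k) j) <= q * B + c) ->
  forall k j, (k <= N)%nat -> P j -> Rabs (e k j) <= INR k * c * q ^ k.
Proof.
  intros Hq Hc H0 Hstep. induction k as [|k IH]; intros j Hk Hj.
  - rewrite H0, Rabs_R0 by exact Hj. simpl. lra.
  - assert (Hqk : 1 <= q ^ k) by (apply pow_R1_Rle; lra).
    assert (HB : 0 <= INR k * c * q ^ k) by (pose proof (pos_INR k); apply Rmult_le_pos; nra).
    eapply Rle_trans; [apply Hstep; [lia|exact HB| |exact Hj]|].
    + intros j' Hj'. apply IH; [lia|exact Hj'].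
    + rewrite S_INR. simpl pow.
      assert (c <= c * (q * q ^ k))
        by (rewrite <- (Rmult_1_r c) at 1; apply Rmult_le_compat_l; nra).
      lra.
Qed.

Lemma Amat_diag_bounds (a b gamma : R) (M : nat) (d : nat -> R) (g : nat -> nat -> R) (i : nat) :
  a < b -> 0 < gamma < 1 -> 0 < mesh a b M -> (1 <= i <= 2 * M - 1)%nat ->
  improper_int (fun y => kern gamma (node a b M i) y) a b (node a b M i) (d i) ->
  improper_int (fun y => phi a b M i y * kern gamma (node a b M i) y)
    a b (node a b M i) (g i i) ->
  0 < g i i ->
  0 <= Amat d g i i <= 2 * Rpower (b - a) (1 - gamma) / (1 - gamma).
Proof.
  intros Hab Hg Hh Hi Hd Hgii Hpos. unfold Amat. rewrite Nat.eqb_refl.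
  pose proof (node_in_interval a b M i Hab Hi) as Hnode.
  pose proof (improper_int_basis_kern_le gamma a b _ M i _ _ Hnode Hh Hgii Hd).
  pose proof (improper_int_kern_le gamma a b _ _ Hnode Hg Hd). lra.
Qed.

Lemma cn_error_equation (M : nat) (d : nat -> R) (g : nat -> nat -> R) (tau rho : R)
  (un uo Un Uo : nat -> R) (F1 F2 : R) (i : nat) :
  0 < tau ->
  Un i + tau / 2 * Amul M d g Un i = Uo i - tau / 2 * Amul M d g Uo i + F1 + F2 ->
  Rabs (/ tau * (un i + tau / 2 * Amul M d g un i - (uo i - tau / 2 * Amul M d g uo i)
                 - F1 - F2)) <= rho ->
  exists r, Rabs r <= tau * rho /\
    un i - Un i + tau / 2 * Amul M d g (fun j => un j - Un j) i
    = uo i - Uo i - tau / 2 * Amul M d g (fun j => uo j - Uo j) i + r.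
Proof.
  intros Htau Hscheme Hres.
  eexists. split.
  - rewrite Rabs_mult, Rabs_pos_eq in Hres by (left; apply Rinv_0_lt_compat, Htau).
    apply Rmult_le_reg_l with (/ tau); [apply Rinv_0_lt_compat, Htau|].
    rewrite <- Rmult_assoc, Rinv_l, Rmult_1_l by lra. exact Hres.
  - rewrite !Amul_sub. lra.
Qed.

Lemma cn_error_bound (M N : nat) (d : nat -> R) (g : nat -> nat -> R) (tau C rho : R)
  (e : nat -> nat -> R) :
  (1 <= M)%nat -> 0 < tau -> 0 <= C -> 0 <= rho ->
  (forall i, (1 <= i <= 2 * M - 1)%nat -> 0 <= Amat d g i i <= C) ->
  (forall i, (1 <= i <= 2 * M - 1)%nat -> offdiag_abs_sum M d g i < Rabs (Amat d g i i)) ->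
  (forall j, (1 <= j <= 2 * M - 1)%nat -> e 0%nat j = 0) ->
  (forall k i, (k < N)%nat -> (1 <= i <= 2 * M - 1)%nat -> exists r, Rabs r <= tau * rho /\
     e (S k) i + tau / 2 * Amul M d g (e (S k)) i = e k i - tau / 2 * Amul M d g (e k) i + r) ->
  forall k j, (k <= N)%nat -> (1 <= j <= 2 * M - 1)%nat ->
    Rabs (e k j) <= INR k * (tau * rho) * (1 + tau * C) ^ k.
Proof.
  intros HM Htau HC Hrho Hdiag Hdom H0 Hstep.
  apply discrete_gronwall; auto.
  - assert (0 <= tau * C) by (apply Rmult_le_pos; lra). lra.
  - apply Rmult_le_pos; lra.
  - intros k B Hk HB Hprev.
    apply (cn_step_max_norm M d g tau C rho B (e (S k)) (e k)); auto.
Qed.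

Lemma growth_bound_le_exp (k : nat) (tau T C c : R) :
  0 <= tau -> 0 <= C -> 0 <= c -> INR k * tau <= T ->
  INR k * (tau * c) * (1 + tau * C) ^ k <= T * c * exp (T * C).
Proof.
  intros Htau HC Hc Htime.
  assert (0 <= INR k * tau) by (apply Rmult_le_pos; [apply pos_INR|lra]).
  assert (Hpow : 0 <= (1 + tau * C) ^ k) by (apply pow_le; nra).
  assert (Hgrowth : (1 + tau * C) ^ k <= exp (T * C)).
  { eapply Rle_trans; [apply pow_1_plus_le_exp; nra|].
    assert (Hexp : INR k * (tau * C) <= T * C) by (rewrite <- Rmult_assoc; nra).
    destruct (Rle_lt_or_eq_dec _ _ Hexp) as [Hlt|Heq].
    - left. apply exp_increasing, Hlt.
    - rewrite Heq. lra. }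
  apply Rle_trans with (T * c * (1 + tau * C) ^ k).
  - apply Rmult_le_compat_r; [exact Hpow|].
    replace (INR k * (tau * c)) with (INR k * tau * c) by ring.
    apply Rmult_le_compat_r; lra.
  - apply Rmult_le_compat_l; [apply Rmult_le_pos; lra|exact Hgrowth].
Qed.

Theorem theorem3p7
  (a b gamma T : R) (M N : nat)
  (u : R -> R -> R) (u0 : R -> R) (f : R -> R -> R)
  (d : nat -> R) (g : nat -> nat -> R)
  (U : nat -> nat -> R) (CR : R) :
  a < b -> 0 < gamma < 1 -> (2 <= M)%nat -> 0 < T -> (1 <= N)%nat ->
  (forall i, (1 <= i <= 2 * M - 1)%nat ->
     improper_int (fun y => kern gamma (node a b M i) y) a b (node a b M i) (d i)) ->
  (forall i j, (1 <= i <= 2 * M - 1)%nat -> (j <= 2 * M)%nat ->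
     improper_int (fun y => phi a b M j y * kern gamma (node a b M i) y)
       a b (node a b M i) (g i j)) ->
  (forall i j, (1 <= i <= 2 * M - 1)%nat -> (1 <= j <= 2 * M - 1)%nat -> 0 < g i j) ->
  (forall i, (1 <= i <= 2 * M - 1)%nat ->
     sum_f 1 (2 * M - 1)
       (fun j => if Nat.eqb i j then 0 else Rabs (Amat d g i j))
     < Rabs (Amat d g i i)) ->
  (forall x t, a < x < b -> 0 < t < T ->
     exists ut I,
       derivable_pt_lim (fun s => u x s) t ut /\
       improper_int (fun y => (u x t - u y t) * kern gamma x y) a b x I /\
       ut + I = f x t) ->
  (forall x, a <= x <= b -> u x 0 = u0 x) ->
  (forall i, (1 <= i <= 2 * M - 1)%nat -> U 0%nat i = u0 (node a b M i)) ->
  (let tau := T / INR N in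
   forall k i, (1 <= k <= N)%nat -> (1 <= i <= 2 * M - 1)%nat ->
     U k i + tau / 2 * Amul M d g (U k) i
     = U (k - 1)%nat i - tau / 2 * Amul M d g (U (k - 1)%nat) i
       + tau * f (node a b M i) ((INR (k - 1) * tau + INR k * tau) / 2)
       + tau * (/ 2 * g i 0%nat * (u a (INR (k - 1) * tau) + u a (INR k * tau))
                + / 2 * g i (2 * M)%nat * (u b (INR (k - 1) * tau) + u b (INR k * tau)))) ->
  (let tau := T / INR N in
   let h := mesh a b M in
   forall k i, (1 <= k <= N)%nat -> (1 <= i <= 2 * M - 1)%nat ->
     Rabs (/ tau *
       ( u (node a b M i) (INR k * tau)
         + tau / 2 * Amul M d g (fun j => u (node a b M j) (INR k * tau)) i
         - ( u (node a b M i) (INR (k - 1) * tau)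
             - tau / 2 * Amul M d g (fun j => u (node a b M j) (INR (k - 1) * tau)) i)
         - tau * f (node a b M i) ((INR (k - 1) * tau + INR k * tau) / 2)
         - tau * (/ 2 * g i 0%nat * (u a (INR (k - 1) * tau) + u a (INR k * tau))
                + / 2 * g i (2 * M)%nat * (u b (INR (k - 1) * tau) + u b (INR k * tau)))))
     <= CR * (tau ^ 2 + Rpower h (4 - gamma))) ->
  let tau := T / INR N in
  let h := mesh a b M in
  let Ca := 2 * Rpower (b - a) (1 - gamma) / (1 - gamma) in
  forall k i, (k <= N)%nat -> (1 <= i <= 2 * M - 1)%nat ->
    Rabs (u (node a b M i) (INR k * tau) - U k i)
    <= CR * T * exp (T * Ca) * (tau ^ 2 + Rpower h (4 - gamma)).
Proof.
  intros Hab Hg HM HT HN Hd Hgij Hgpos Hdom _ Hu0 HU0 Hscheme Hres tau h Ca k i Hk Hi.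
  cbv zeta in Hscheme, Hres. fold tau in Hscheme, Hres. fold h in Hres.
  set (rho := CR * (tau ^ 2 + Rpower h (4 - gamma))) in *.
  assert (Htau : 0 < tau) by (apply Rdiv_lt_0_compat; [lra|apply lt_0_INR; lia]).
  assert (Hh : 0 < mesh a b M) by (apply Rdiv_lt_0_compat; [lra|apply lt_0_INR; lia]).
  assert (Hrho : 0 <= rho) by (eapply Rle_trans; [apply Rabs_pos|apply (Hres 1%nat 1%nat); lia]).
  assert (Hdiag : forall j, (1 <= j <= 2 * M - 1)%nat -> 0 <= Amat d g j j <= Ca)
    by (intros j Hj; apply (Amat_diag_bounds a b gamma M); auto; apply Hgij; lia).
  assert (HCa : 0 <= Ca) by (pose proof (Hdiag 1%nat ltac:(lia)); lra).
  assert (Htime : INR k * tau <= INR N * tau)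
    by (apply Rmult_le_compat_r; [lra|apply le_INR, Hk]).
  replace (INR N * tau) with T in Htime by (unfold tau; field; apply not_0_INR; lia).
  replace (CR * T * exp (T * Ca) * (tau ^ 2 + Rpower h (4 - gamma)))
    with (T * rho * exp (T * Ca)) by (unfold rho; ring).
  apply Rle_trans with (INR k * (tau * rho) * (1 + tau * Ca) ^ k);
    [|apply growth_bound_le_exp; lra].
  apply (cn_error_bound M N d g tau Ca rho
    (fun k j => u (node a b M j) (INR k * tau) - U k j)); auto; try lia.
  - intros j Hj. pose proof (node_in_interval a b M j Hab Hj).
    simpl INR. rewrite Rmult_0_l, Hu0, HU0 by (auto; lra). ring.
  - intros k' j Hk' Hj.
    pose proof (Hscheme (S k') j ltac:(lia) Hj) as Hstep.
    pose proof (Hres (S k') j ltac:(lia) Hj) as Hresj.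
    replace (S k' - 1)%nat with k' in Hstep, Hresj by lia.
    eapply (cn_error_equation M d g tau rho (fun j => u (node a b M j) (INR (S k') * tau))
      (fun j => u (node a b M j) (INR k' * tau)) (U (S k')) (U k')); eassumption.
Qed.
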